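(* Let $m,d\geq 1$ and let $f:(0,\infty)^m\times\mathbb{R}^d\to\mathbb{R}$, $f=f(t,x)$ with $t=(t^1,\dots,t^m)$, $x=(x^1,\dots,x^d)$, satisfy $f(t,0)=0$, have continuous first-order partial derivatives with respect to each $t^\alpha$ and continuous second-order partial derivatives with respect to the $x^a$. Suppose $f$ is a solution of the forward diffusion-like PDE system $$\frac{\partial f}{\partial t^\alpha}(t,x)-\frac12\,c_\alpha(t)\,\Delta_x f(t,x)=0,\qquad \alpha=1,\dots,m.$$ Then $f$ depends on the point $t=(t^1,\dots,t^m)$ only through the product $v=t^1\cdots t^m$, i.e. there is a function $\varphi$ with $f(t,x)=\varphi(t^1\cdots t^m,x)$; thus $f$ is a function of the volume $v$ of the box $\Omega_{0t}=\prod_{\alpha}[0,t^\alpha]$.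
   Context: Here $c_\alpha(t)=\frac{\partial v}{\partial t^\alpha}=\prod_{\beta\neq\alpha}t^\beta$ where $v=t^1\cdots t^m$, and $\Delta_x f=\sum_{a,b=1}^d\delta^{ab}\frac{\partial^2 f}{\partial x^a\partial x^b}=\sum_{a=1}^d\frac{\partial^2 f}{(\partial x^a)^2}$. *)

From HB Require Import structures.
From mathcomp Require Import all_boot all_order all_algebra.
From mathcomp Require Import all_classical all_reals all_analysis.
Set Implicit Arguments. Unset Strict Implicit. Unset Printing Implicit Defensive.
Import Order.TTheory GRing.Theory Num.Theory.
Import numFieldNormedType.Exports.
Local Open Scope ring_scope.
Local Open Scope classical_set_scope.

Section Defs.
Variable R : realType.

Definition evec (n : nat) (i : 'I_n) : 'rV[R]_n := delta_mx 0 i.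

Definition posvec (m : nat) (t : 'rV[R]_m) : Prop := forall i, 0 < t 0 i.

Definition dom (m d : nat) : set ('rV[R]_m * 'rV[R]_d) := [set p | posvec p.1].

Definition dt (m d : nat) (f : 'rV[R]_m -> 'rV[R]_d -> R) (al : 'I_m)
  (t : 'rV[R]_m) (x : 'rV[R]_d) : R :=
  'D_(evec al) (fun s => f s x) t.

Definition dx (m d : nat) (f : 'rV[R]_m -> 'rV[R]_d -> R) (a : 'I_d)
  (t : 'rV[R]_m) (x : 'rV[R]_d) : R :=
  'D_(evec a) (fun y => f t y) x.

Definition cfun (m : nat) (al : 'I_m) (t : 'rV[R]_m) : R :=
  \prod_(be < m | be != al) t 0 be.

Definition laplacian (m d : nat) (f : 'rV[R]_m -> 'rV[R]_d -> R)
  (t : 'rV[R]_m) (x : 'rV[R]_d) : R :=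
  \sum_(a < d) dx (dx f a) a t x.

End Defs.

From HB Require Import structures.
From mathcomp Require Import all_boot all_order all_algebra.
From mathcomp Require Import all_classical all_reals all_analysis.
From mathcomp Require Import ring lra.
Import Order.TTheory GRing.Theory Num.Theory.
Import numFieldNormedType.Exports.
Local Open Scope ring_scope.
Local Open Scope classical_set_scope.

(* The system says that t^al * df/dt^al = 1/2 * v * Lap_x f is the same quantity for
   every al.  Hence, for al != be and the other coordinates fixed, along the hyperbola
   t^al * t^be = P the map s |-> f(.., s, .., P / s, ..) has derivative
   (t^al df/dt^al - t^be df/dt^be) / s = 0, so f only sees the product t^al * t^be.
   Merging the coordinates one at a time into a fixed one gives
   f(t, x) = f((v, 1, ..., 1), x). *)

Lemma cvg_to_dnbhs {T : Type} {U : topologicalType} (F : set_system T) {FF : Filter F}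
    (f : T -> U) (a : U) :
  f @ F --> a -> (\forall x \near F, f x != a) -> f @ F --> a^'.
Proof. by move=> fa fneq Q /fa; apply: filterS2 fneq => x /[swap] /[apply]. Qed.

Section MeanValuePositive.
Context {R : realType} {F dF : R -> R}.
Hypothesis F_derive : forall a : R, 0 < a -> is_derive a 1 F (dF a).

Lemma MVT_pos_segment {u v : R} : 0 < u -> u <= v ->
  exists2 c, c \in `[u, v]%R & F v - F u = dF c * (v - u).
Proof.
move=> u0 uv; apply: MVT_segment => // [x|].
  by rewrite in_itv /= => /andP[ux _]; apply: F_derive; apply: lt_trans ux.
apply: derivable_within_continuous => x; rewrite in_itv /= => /andP[ux _].
by have [] := F_derive x (lt_le_trans u0 ux).
Qed.

Lemma MVT_pos {s h : R} : 0 < s -> 0 < s + h ->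
  exists2 c, `|c - s| <= `|h| & F (s + h) - F s = dF c * h.
Proof.
move=> s0 sh0; have [h0|h0] := leP 0 h.
  have [|c] := MVT_pos_segment s0 (_ : s <= s + h); first by rewrite lerDl.
  rewrite in_itv /= (addrC s h) addrK => /andP[sc ch] ->; exists c => //.
  by rewrite !ger0_norm ?subr_ge0 //; lra.
have [|c] := MVT_pos_segment sh0 (_ : s + h <= s); first by rewrite gerDl ltW.
rewrite in_itv /= => /andP[sc cs] E; exists c; last by rewrite -opprB E; ring.
by rewrite ler0_norm ?subr_le0 // ltr0_norm //; lra.
Qed.

End MeanValuePositive.

Lemma derive0_cst_pos {R : realType} (F : R -> R) x y :
  (forall a : R, 0 < a -> is_derive a 1 F 0) -> 0 < x -> 0 < y -> F x = F y.
Proof.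
move=> F0 x0 y0; have [|c _] := MVT_pos (dF := fun=> 0) F0 (h := y - x) x0.
  by rewrite subrKC.
by rewrite mul0r subrKC => /eqP; rewrite subr_eq0 => /eqP.
Qed.

Section AlongHyperbola.
Context {R : realType} {g g1 g2 : R -> R -> R}.
Hypothesis g_derive1 : forall a b : R, 0 < a -> 0 < b ->
  is_derive a 1 (fun a' => g a' b) (g1 a b).
Hypothesis g_derive2 : forall a b : R, 0 < a -> 0 < b -> is_derive b 1 (g a) (g2 a b).
Hypothesis g1_cont : forall a b : R, 0 < a -> 0 < b -> forall e : R, 0 < e ->
  exists2 r : R, 0 < r & forall a' b' : R, `|a' - a| < r -> `|b' - b| < r ->
    `|g1 a' b' - g1 a b| < e.

Lemma quotient_first_cvg {s b : R} {beta : R -> R} :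
  0 < s -> 0 < b -> beta @ 0^' --> b ->
  h^-1 * (g (s + h) (beta h) - g s (beta h)) @[h --> 0^'] --> g1 s b.
Proof.
move=> s0 b0 beta_b; apply/cvgrPdist_lt => e e0.
have [r r0 g1_near] := g1_cont _ _ s0 b0 _ e0.
have rs0 : 0 < Num.min r s by rewrite lt_min r0 s0.
have rb0 : 0 < Num.min r b by rewrite lt_min r0 b0.
have /cvgrPdist_lt /(_ _ rb0) beta_near := beta_b.
near=> h.
have hn : h != 0 by near: h; exact: nbhs_dnbhs_neq.
have hr : `|h| < Num.min r s by near: h; exact: dnbhs0_lt.
have br : `|b - beta h| < Num.min r b by near: h; exact: beta_near.
move: hr br; rewrite !lt_min => /andP[hr hs] /andP[br bb].
have beta0 : 0 < beta h by have := ler_norm (b - beta h); lra.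
have sh0 : 0 < s + h by have := ler_norm (- h); rewrite normrN; lra.
have [c cs ->] := MVT_pos (fun a a0 => g_derive1 _ _ a0 beta0) s0 sh0.
rewrite [h^-1 * _]mulrC mulfK // distrC; apply: g1_near; last by rewrite distrC.
exact: le_lt_trans cs hr.
Unshelve. all: by end_near.
Qed.

Lemma is_derive_hyperbola (P s : R) : 0 < P -> 0 < s ->
  is_derive s 1 (fun a => g a (P / a)) (g1 s (P / s) - P / s ^+ 2 * g2 s (P / s)).
Proof.
move=> P0 s0; set b := P / s; have b0 : 0 < b by exact: divr_gt0.
have near_h : \forall h \near 0^', h != 0 /\ 0 < s + h.
  near=> h; split; first by near: h; exact: nbhs_dnbhs_neq.
  have : `|h| < s by near: h; exact: dnbhs0_lt.
  by have := ler_norm (- h); rewrite normrN; lra.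
have inv_cvg : (s + h)^-1 @[h --> 0^'] --> s^-1.
  apply: cvg_within_filter; apply: cvgV; first by rewrite gt_eqF.
  by rewrite -[X in _ --> X]addr0; apply: cvgD; [exact: cvg_cst | exact: cvg_id].
pose beta h := P / (s + h).
have beta_b : beta @ 0^' --> b by exact: cvgMl_tmp.
have beta_diff h : 0 < s + h -> beta h - b = - (P / s) / (s + h) * h.
  by move=> sh0; rewrite /beta /b; field; rewrite !gt_eqF.
have slope_cvg : (beta h - b) / h @[h --> 0^'] --> - (P / s) / s.
  apply: cvg_trans (near_eq_cvg _) (cvgMl_tmp inv_cvg).
  near=> h; have [hn sh0] : h != 0 /\ 0 < s + h by near: h; exact: near_h.
  by rewrite beta_diff // mulfK.
pose k u := u^-1 *: ((g s \o shift b) (u *: 1) - g s b).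
have k_cvg : k @ 0^' --> g2 s b by have [k_cvg <-] := g_derive2 _ _ s0 b0.
have beta_neq h : h != 0 -> 0 < s + h -> beta h - b != 0.
  move=> hn sh0; rewrite beta_diff //; apply: (mulf_neq0 _ hn).
  by apply: mulf_neq0; rewrite ?oppr_eq0 ?invr_eq0 gt_eqF //; exact: divr_gt0.
have k_beta_cvg : k (beta h - b) @[h --> 0^'] --> g2 s b.
  apply: cvg_comp k_cvg; apply: cvg_to_dnbhs.
    by rewrite -[X in _ --> X](subrr b); apply: cvgB => //; exact: cvg_cst.
  near=> h; have [hn sh0] : h != 0 /\ 0 < s + h by near: h; exact: near_h.
  exact: beta_neq.
(* The difference quotient splits as [g(s+h, beta) - g(s, beta)] / h
   + (beta - b) / h * [g(s, beta) - g(s, b)] / (beta - b). *)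
have q_cvg : h^-1 *: (((fun a => g a (P / a)) \o shift s) (h *: 1) - g s b)
    @[h --> 0^'] --> g1 s b - P / s ^+ 2 * g2 s b.
  have -> : g1 s b - P / s ^+ 2 * g2 s b = g1 s b + (- (P / s) / s) * g2 s b.
    by field; rewrite gt_eqF.
  have lim := cvgD (quotient_first_cvg s0 b0 beta_b) (cvgM slope_cvg k_beta_cvg).
  apply: cvg_trans (near_eq_cvg _) (lim _ _).
  near=> h; have [hn sh0] : h != 0 /\ 0 < s + h by near: h; exact: near_h.
  have un := beta_neq h hn sh0; rewrite /k /beta /GRing.mul_fun !fctE /= in un *.
  set u := _ - b in un *.
  have -> : u%:A + b = P / (s + h) by rewrite -[u%:A]/(u * 1) mulr1 subrK.
  rewrite -[h%:A]/(h * 1) mulr1 (addrC h s).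
  rewrite -[u^-1 *: _]/(u^-1 * _) -[h^-1 *: _]/(h^-1 * _).
  by clearbody u; field; rewrite un hn.
by split; [exact: cvgP q_cvg | exact: cvg_lim q_cvg].
Unshelve. all: by end_near.
Qed.

Hypothesis g_balance : forall a b : R, 0 < a -> 0 < b -> a * g1 a b = b * g2 a b.

Lemma hyperbola_const (P s s' : R) : 0 < P -> 0 < s -> 0 < s' ->
  g s (P / s) = g s' (P / s').
Proof.
move=> P0; apply: (derive0_cst_pos (fun a => g a (P / a))) => a a0.
have := is_derive_hyperbola P a P0 a0.
suff -> : g1 a (P / a) - P / a ^+ 2 * g2 a (P / a) = 0 by [].
rewrite -[g1 a _](mulKf (lt0r_neq0 a0)) g_balance ?divr_gt0 //.
by field; rewrite gt_eqF.
Qed.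

End AlongHyperbola.

Section CoordinatePair.
Context {R : realType} {m : nat}.
Implicit Types (t : 'rV[R]_m) (al be : 'I_m) (a b : R).

Definition row_set2 t al be a b : 'rV[R]_m :=
  \row_j if j == al then a else if j == be then b else t 0 j.

Lemma row_set2_l t al be a b : row_set2 t al be a b 0 al = a.
Proof. by rewrite mxE eqxx. Qed.

Lemma row_set2_r t al be a b : al != be -> row_set2 t al be a b 0 be = b.
Proof. by move=> ab; rewrite mxE eq_sym (negbTE ab) eqxx. Qed.

Lemma row_set2C t al be a b : al != be -> row_set2 t al be a b = row_set2 t be al b a.
Proof.
move=> ab; apply/matrixP => i j; rewrite !mxE.
by case: eqVneq => [->|//]; rewrite (negbTE ab).
Qed.

Lemma row_set2_id t al be : row_set2 t al be (t 0 al) (t 0 be) = t.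
Proof.
apply/matrixP => i j; rewrite mxE (ord1 i).
by case: eqVneq => [->|_]; [|case: eqVneq => [->|]].
Qed.

Lemma row_set2_pos t al be a b :
  posvec t -> 0 < a -> 0 < b -> posvec (row_set2 t al be a b).
Proof. by move=> tp a0 b0 j; rewrite mxE; case: ifP => // _; case: ifP. Qed.

Lemma row_set2_shift t al be a b h :
  row_set2 t al be (h + a) b = h *: evec R al + row_set2 t al be a b.
Proof.
apply/matrixP => i j; rewrite !mxE (ord1 i) eqxx /=.
by case: eqVneq => _; rewrite ?mulr1 ?mulr0 ?add0r.
Qed.

Lemma is_derive_row_set2 (F : 'rV[R]_m -> R) t al be a b :
  derivable F (row_set2 t al be a b) (evec R al) ->
  is_derive a 1 (fun a' => F (row_set2 t al be a' b))
    ('D_(evec R al) F (row_set2 t al be a b)).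
Proof.
pose p := row_set2 t al be a b; pose Fa a' := F (row_set2 t al be a' b).
have E : (fun h : R => h^-1 *: ((Fa \o shift a) (h *: 1) - F p)) =
    (fun h => h^-1 *: ((F \o shift p) (h *: evec R al) - F p)).
  by apply: funext => h; rewrite /= /Fa -[h *: 1]/(h * 1) mulr1 row_set2_shift.
by move=> dF; split; rewrite /derivable /derive E.
Qed.

Lemma row_set2_cont_eps {d : nat} (G : 'rV[R]_m * 'rV[R]_d -> R) t x al be a b :
  posvec t -> 0 < a -> 0 < b -> {within @dom R m d, continuous G} ->
  forall e : R, 0 < e -> exists2 r : R, 0 < r & forall a' b' : R,
    `|a' - a| < r -> `|b' - b| < r ->
    `|G (row_set2 t al be a' b', x) - G (row_set2 t al be a b, x)| < e.
Proof.
move=> tp a0 b0 G_cont e e0; pose p := (row_set2 t al be a b, x).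
have pdom : dom p by exact: row_set2_pos.
have /cvgrPdist_lt /(_ e e0) : G @ within (@dom R m d) (nbhs p) --> G p.
  by have := G_cont p; rewrite /continuous_at; case: (nbhs_subspaceP (@dom R m d) p).
move=> /(nbhs_ballP _ _) [r r0 G_near].
exists (Num.min r (Num.min a b)); first by rewrite !lt_min r0 a0 b0.
move=> a' b'; rewrite !lt_min => /andP[ar /andP[aa _]] /andP[br /andP[_ bb]].
have a'0 : 0 < a' by have := ler_norm (a - a'); rewrite distrC; lra.
have b'0 : 0 < b' by have := ler_norm (b - b'); rewrite distrC; lra.
rewrite distrC; apply: G_near; last exact: row_set2_pos.
split; last exact: ballxx.
(* balls in 'rV are entrywise *)
rewrite /ball /=; split => // i j; rewrite !mxE.
case: ifP => _; [|case: ifP => _]; last exact: ballxx.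
all: by rewrite /ball /= distrC.
Qed.

Lemma prod_row_set2 t al be : al != be ->
  \prod_i row_set2 t al be (t 0 al * t 0 be) 1 0 i = \prod_i t 0 i.
Proof.
move=> ab; have ba : be != al by rewrite eq_sym.
rewrite (bigD1 al) // (bigD1 be) //= [in RHS](bigD1 al) // [in RHS](bigD1 be) //=.
rewrite row_set2_l row_set2_r // mul1r mulrA; congr (_ * _).
by apply: eq_bigr => i /andP[ia ib]; rewrite mxE (negbTE ia) (negbTE ib).
Qed.

Lemma cfunM t al : t 0 al * cfun al t = \prod_i t 0 i.
Proof. by rewrite /cfun [RHS](bigD1 al). Qed.

Definition row_one_but (i0 : 'I_m) (v : R) : 'rV[R]_m :=
  \row_i if i == i0 then v else 1.

Lemma row_one_butE i0 t : (forall i, i != i0 -> t 0 i = 1) ->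
  row_one_but i0 (\prod_i t 0 i) = t.
Proof.
move=> t1; rewrite (bigD1 i0) //= big1 ?mulr1 => [|i /t1 //].
by apply/matrixP => i j; rewrite mxE (ord1 i); case: eqVneq => [->|/t1 ->].
Qed.

End CoordinatePair.

Section ProductInvariance.
Context {R : realType} {m d : nat} (f : 'rV[R]_m -> 'rV[R]_d -> R).
Hypothesis dt_ex : forall (al : 'I_m) (t : 'rV[R]_m) (x : 'rV[R]_d),
  posvec t -> derivable (fun s => f s x) t (evec R al).
Hypothesis dt_cont : forall al : 'I_m,
  {within @dom R m d, continuous (fun p => dt f al p.1 p.2)}.
Hypothesis pde : forall (al : 'I_m) (t : 'rV[R]_m) (x : 'rV[R]_d),
  posvec t -> dt f al t x - 2^-1 * cfun al t * laplacian f t x = 0.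

Lemma coord_mul_dt t x al : posvec t ->
  t 0 al * dt f al t x = 2^-1 * (\prod_i t 0 i) * laplacian f t x.
Proof.
move=> tp; have /eqP := pde al t x tp; rewrite subr_eq0 => /eqP ->.
by rewrite -(cfunM t al); ring.
Qed.

Lemma merge_coords_invariant t x al be : al != be -> posvec t ->
  f t x = f (row_set2 t al be (t 0 al * t 0 be) 1) x.
Proof.
move=> ab tp; pose g a b := f (row_set2 t al be a b) x.
have derive1 (a b : R) : 0 < a -> 0 < b ->
    is_derive a 1 (g^~ b) (dt f al (row_set2 t al be a b) x).
  by move=> a0 b0; apply: is_derive_row_set2; apply: dt_ex; exact: row_set2_pos.
have derive2 (a b : R) : 0 < a -> 0 < b ->
    is_derive b 1 (g a) (dt f be (row_set2 t al be a b) x).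
  move=> a0 b0; have -> : g a = fun b' => f (row_set2 t be al b' a) x.
    by apply: funext => b'; rewrite /g row_set2C.
  by rewrite row_set2C //; apply: is_derive_row_set2; apply: dt_ex; exact: row_set2_pos.
have balance (a b : R) : 0 < a -> 0 < b ->
    a * dt f al (row_set2 t al be a b) x = b * dt f be (row_set2 t al be a b) x.
  move=> a0 b0; have tp' : posvec (row_set2 t al be a b) by exact: row_set2_pos.
  rewrite -[X in X * _ = _](row_set2_l t al be a b).
  by rewrite -[X in _ = X * _](row_set2_r t al be a b ab) !coord_mul_dt.
have P0 : 0 < t 0 al * t 0 be by rewrite mulr_gt0.
have cont1 a b a0 b0 := row_set2_cont_eps _ t x al be a b tp a0 b0 (dt_cont al).
have := hyperbola_const derive1 derive2 cont1 balance _ _ _ P0 (tp al) P0.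
by rewrite mulrAC !divff ?mul1r ?lt0r_neq0 // /g row_set2_id.
Qed.

Lemma eq_at_row_one_but i0 t x : posvec t ->
  f t x = f (row_one_but i0 (\prod_i t 0 i)) x.
Proof.
have [n] := ubnP #|[pred i | (i != i0) && (t 0 i != 1)]|.
elim: n t => // n IH t; rewrite ltnS => count_le tp.
have [be /andP[bi0 bt1] | t1] := pickP [pred i | (i != i0) && (t 0 i != 1)]; last first.
  rewrite row_one_butE // => i i0i; apply/eqP.
  by move: (t1 i); rewrite /= i0i => /negbFE.
have i0b : i0 != be by rewrite eq_sym.
rewrite (merge_coords_invariant t x i0 be i0b tp) -(prod_row_set2 t i0 be i0b).
apply: IH; last first.
  by apply: row_set2_pos => //; rewrite mulr_gt0.
apply: leq_trans count_le; apply: proper_card; apply/properP; split.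
  apply/fintype.subsetP => i; rewrite !inE /row_set2 mxE => /andP[ii0].
  by rewrite (negbTE ii0) /=; case: ifP; rewrite ?eqxx.
exists be; first by rewrite inE bi0 bt1.
by rewrite inE row_set2_r // eqxx andbF.
Qed.

End ProductInvariance.

Theorem mainTheorem1 (R : realType) (m d : nat)
  (f : 'rV[R]_m -> 'rV[R]_d -> R)
  (hm : (1 <= m)%N) (hd : (1 <= d)%N)
  (f0 : forall t : 'rV[R]_m, posvec t -> f t 0 = 0)
  (dt_ex : forall (al : 'I_m) (t : 'rV[R]_m) (x : 'rV[R]_d),
      posvec t -> derivable (fun s => f s x) t (evec R al))
  (dt_cont : forall al : 'I_m,
      {within @dom R m d, continuous (fun p => dt f al p.1 p.2)})
  (dx_ex : forall (a : 'I_d) (t : 'rV[R]_m) (x : 'rV[R]_d),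
      posvec t -> derivable (fun y => f t y) x (evec R a))
  (dxx_ex : forall (a b : 'I_d) (t : 'rV[R]_m) (x : 'rV[R]_d),
      posvec t -> derivable (fun y => dx f a t y) x (evec R b))
  (dxx_cont : forall a b : 'I_d,
      {within @dom R m d, continuous (fun p => dx (dx f a) b p.1 p.2)})
  (pde : forall (al : 'I_m) (t : 'rV[R]_m) (x : 'rV[R]_d),
      posvec t -> dt f al t x - 2^-1 * cfun (R:=R) al t * laplacian f t x = 0) :
  exists phi : R -> 'rV[R]_d -> R,
    forall (t : 'rV[R]_m) (x : 'rV[R]_d),
      posvec t -> f t x = phi (\prod_(al < m) t 0 al) x.
Proof.
exists (fun v x => f (row_one_but (Ordinal hm) v) x) => t x.
exact: eq_at_row_one_but dt_ex dt_cont pde (Ordinal hm) t x.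
Qed.
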